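(* For $\mathfrak g=A_2$ and every $n\in\mathbb N$, $S_{n\lambda_1,2}=\mathcal L_{n\lambda_1,2}\cap P_{2n\lambda_1}$.
   Context: $A_2=\mathfrak{sl}_3$ with simple roots $\alpha_1,\alpha_2$, fundamental weights $\lambda_1,\lambda_2$, weight lattice $\Lambda$, root lattice $\Lambda_r$, dominant weights $\Lambda^+$, Weyl group $W$, $\rho=\lambda_1+\lambda_2$. $\Pi_\lambda$ is the set of weights of $V_\lambda$; $S_{\lambda,a}=[\bigcup_{\sigma\in W}(\sigma(\rho)-\rho+a\Pi_\lambda)]\cap\Lambda^+$; $\mathcal L_{\lambda,a}=\bigcup_{\sigma\in W}(a\lambda+\sigma(\rho)-\rho+a\Lambda_r)$; $P_\lambda$ is the convex hull of $\Pi_\lambda\cap\Lambda^+$ (so $\mathcal L_{\lambda,a}\cap P_{a\lambda}$ is a set of weights). *)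

From HB Require Import structures.
From mathcomp Require Import all_boot all_order all_algebra.
Set Implicit Arguments. Unset Strict Implicit. Unset Printing Implicit Defensive.
Import Order.TTheory GRing.Theory Num.Theory.
Local Open Scope ring_scope.

(* A weight x is written in the basis of fundamental weights:
   x = x.1 * lambda_1 + x.2 * lambda_2, so the weight lattice is int * int. *)
Definition weight := (int * int)%type.

Definition wadd (x y : weight) : weight := (x.1 + y.1, x.2 + y.2).
Definition wsub (x y : weight) : weight := (x.1 - y.1, x.2 - y.2).
Definition wscale (a : int) (x : weight) : weight := (a * x.1, a * x.2).

Definition lambda1 : weight := (1, 0).
Definition lambda2 : weight := (0, 1).
Definition rho : weight := wadd lambda1 lambda2.
(* simple roots in the fundamental-weight basis (rows of the Cartan matrix) *)
Definition alpha1 : weight := (2, -1).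
Definition alpha2 : weight := (-1, 2).

(* simple reflections s_i(mu) = mu - <mu, alpha_i^vee> alpha_i *)
Definition s1 (mu : weight) : weight := wsub mu (wscale mu.1 alpha1).
Definition s2 (mu : weight) : weight := wsub mu (wscale mu.2 alpha2).

(* Weyl group W = group generated by s1, s2: an element is given by a word
   (true = s1, false = s2); weyl_act w is the corresponding element of W. *)
Definition weyl_act (w : seq bool) (mu : weight) : weight :=
  foldr (fun b m => if b then s1 m else s2 m) mu w.

Definition in_root_lattice (nu : weight) : Prop :=
  exists c1 c2 : int, nu = wadd (wscale c1 alpha1) (wscale c2 alpha2).

Definition in_pos_root_cone (nu : weight) : Prop :=
  exists c1 c2 : nat, nu = wadd (wscale c1%:Z alpha1) (wscale c2%:Z alpha2).

Definition dominant (mu : weight) : Prop := 0 <= mu.1 /\ 0 <= mu.2.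

(* Pi_lambda, the set of weights of V_lambda (lambda dominant):
   mu is a weight iff sigma(mu) <= lambda in dominance order for all sigma in W
   (Humphreys, 21.3). *)
Definition weights_of (lam mu : weight) : Prop :=
  forall w : seq bool, in_pos_root_cone (wsub lam (weyl_act w mu)).

Definition S_set (lam : weight) (a : int) (nu : weight) : Prop :=
  dominant nu /\
  exists (w : seq bool) (mu : weight),
    weights_of lam mu /\ nu = wadd (wsub (weyl_act w rho) rho) (wscale a mu).

Definition L_set (lam : weight) (a : int) (nu : weight) : Prop :=
  exists (w : seq bool) (r : weight),
    in_root_lattice r /\
    nu = wadd (wadd (wscale a lam) (wsub (weyl_act w rho) rho)) (wscale a r).

(* convex hull (in Lambda (x) R, coordinates in R) of a set A of weights *)
Definition in_hull (R : realFieldType) (A : weight -> Prop) (x : weight) : Prop :=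
  exists s : seq (weight * R),
    (forall p, p \in s -> A p.1 /\ 0 <= p.2) /\
    \sum_(p <- s) p.2 = 1 /\
    \sum_(p <- s) p.2 * (p.1.1)%:~R = (x.1)%:~R /\
    \sum_(p <- s) p.2 * (p.1.2)%:~R = (x.2)%:~R.

Definition in_P (R : realFieldType) (lam : weight) (x : weight) : Prop :=
  in_hull R (fun mu => weights_of lam mu /\ dominant mu) x.

(* The weights of V_{n lambda_1} form the lattice points of the triangle
   a + 2b <= n, a - b <= n, -2a - b <= n congruent to n lambda_1 modulo the
   root lattice.  The six shifts sigma(rho) - rho fall into only three classes
   modulo 2 Lambda_r, represented by 0, -alpha_1 and -alpha_2.  So an element
   nu of L_{n lambda_1,2} is 2 n lambda_1 + tau + 2r with tau one of these
   representatives, and when nu lies in P_{2n lambda_1}, i.e. in the triangle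
   x, y >= 0, x + 2y <= 2n, the weight mu = n lambda_1 + r satisfies the
   triangle inequalities (parity and the congruence mod 3 rule out the
   boundary cases), giving nu = sigma(rho) - rho + 2 mu in S_{n lambda_1,2}.
   Conversely a dominant sigma(rho) - rho + 2 mu is itself a weight of
   V_{2n lambda_1}, hence lies in its own convex hull. *)

From HB Require Import structures.
From mathcomp Require Import all_boot all_order all_algebra.
From mathcomp Require Import zify ring.
Import Order.TTheory GRing.Theory Num.Theory.
Local Open Scope ring_scope.

Definition weyl_orbit (mu : weight) : seq weight :=
  [:: mu; (- mu.1, mu.1 + mu.2); (mu.1 + mu.2, - mu.2);
      (mu.2, - mu.1 - mu.2); (- mu.1 - mu.2, mu.1); (- mu.2, - mu.1)].

Ltac unfold_weights :=
  rewrite /= /s1 /s2 /wadd /wsub /wscale /rho /lambda1 /lambda2 /alpha1 /alpha2 /=.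

Lemma weyl_act_orbit (w : seq bool) (mu : weight) : weyl_act w mu \in weyl_orbit mu.
Proof.
elim: w => [|b w] /=; first by rewrite inE eqxx.
case: mu => a c; rewrite !inE.
move=> /orP[|/orP[|/orP[|/orP[|/orP[]]]]] /eqP ->;
  by case: b; unfold_weights; rewrite !xpair_eqE; lia.
Qed.

Lemma pos_root_coneP (nu : weight) :
  in_pos_root_cone nu <->
  exists c1 c2 : int, [/\ 0 <= c1, 0 <= c2 & nu = (2 * c1 - c2, 2 * c2 - c1)].
Proof.
split=> [[c1 [c2 ->]] | [c1 [c2 [c1_ge0 c2_ge0 ->]]]].
  by exists c1%:Z, c2%:Z; split; [lia | lia | unfold_weights; congr pair; lia].
by exists `|c1|%N, `|c2|%N; rewrite !gez0_abs //; unfold_weights; congr pair; lia.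
Qed.

Lemma weights_of_root_lattice (lam mu : weight) :
  weights_of lam mu -> in_root_lattice (wsub mu lam).
Proof.
move=> /(_ [::]) /pos_root_coneP [c1 [c2 [_ _ E]]]; exists (- c1), (- c2).
by move: E; case: lam mu => [l1 l2] [m1 m2]; unfold_weights => -[E1 E2]; congr pair; lia.
Qed.

(* [p] is the coefficient of alpha_2 in N lambda_1 - (a, b). *)
Lemma weights_nlambda1P (N a b : int) :
  weights_of (N, 0) (a, b) <->
  exists p : int, [/\ 0 <= p, 0 <= p + b, 0 <= p + a + b & N = 3 * p + a + 2 * b].
Proof.
split=> [Hw | [p [p_ge0 pb_ge0 pab_ge0 ->]] w].
  have /pos_root_coneP [c1 [c2 [_ c2_ge0 E]]] := Hw [:: false; true].
  have /pos_root_coneP [d1 [d2 [_ d2_ge0 E0]]] := Hw [::].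
  have /pos_root_coneP [e1 [e2 [_ e2_ge0 E1]]] := Hw [:: false].
  move: E E0 E1; unfold_weights => -[? ?] [? ?] [? ?].
  by exists d2; split; lia.
apply/pos_root_coneP; move: (weyl_act_orbit w (a, b)); rewrite !inE.
move=> /orP[|/orP[|/orP[|/orP[|/orP[]]]]] /eqP ->.
- by exists (2 * p + b), p; split; [lia | lia | unfold_weights; congr pair; lia].
- by exists (2 * p + a + b), p; split; [lia | lia | unfold_weights; congr pair; lia].
- by exists (2 * p + b), (p + b); split; [lia | lia | unfold_weights; congr pair; lia].
- by exists (2 * p + a + b), (p + a + b); split; [lia | lia | unfold_weights; congr pair; lia].
- by exists (2 * p + a + 2 * b), (p + b); split; [lia | lia | unfold_weights; congr pair; lia].
- by exists (2 * p + a + 2 * b), (p + a + b); split; [lia | lia | unfold_weights; congr pair; lia].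
Qed.

Lemma in_hull_mem (R : realFieldType) (A : weight -> Prop) (x : weight) :
  A x -> in_hull R A x.
Proof.
move=> Ax; exists [:: (x, 1)]; rewrite !big_seq1 /= !mul1r; split=> // p.
by rewrite inE => /eqP ->.
Qed.

Lemma in_hull_ge0 (R : realFieldType) (A : weight -> Prop) (al be ga : int) (x : weight) :
  (forall p, A p -> 0 <= al * p.1 + be * p.2 + ga) ->
  in_hull R A x -> 0 <= al * x.1 + be * x.2 + ga.
Proof.
move=> HA [s [Hs [sum1 [sumX sumY]]]].
have E : \sum_(p <- s) p.2 * (al * p.1.1 + be * p.1.2 + ga)%:~R =
    al%:~R * \sum_(p <- s) p.2 * p.1.1%:~R + be%:~R * \sum_(p <- s) p.2 * p.1.2%:~R
    + ga%:~R * \sum_(p <- s) p.2 :> R.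
  rewrite !mulr_sumr -!big_split; apply: eq_bigr => p _ /=.
  by rewrite !intrD !intrM; ring.
rewrite sumX sumY sum1 mulr1 -!intrM -!intrD in E.
rewrite -(ler0z R) -E big_seq; apply: sumr_ge0 => p /Hs [/HA Ap p_ge0].
by rewrite mulr_ge0 // ler0z.
Qed.

Lemma S_set_sub_L_set (lam : weight) (a : int) (nu : weight) :
  S_set lam a nu -> L_set lam a nu.
Proof.
case=> _ [w [mu [/weights_of_root_lattice Hr ->]]]; exists w, (wsub mu lam).
split=> //; clear Hr; case: lam mu (weyl_act w rho) => [l1 l2] [m1 m2] [t1 t2].
by unfold_weights; congr pair; ring.
Qed.

Lemma L_set2_reduced (lam nu : weight) :
  L_set lam 2 nu ->
  exists (w : seq bool) (c1 c2 : int), w \in [:: [::]; [:: true]; [:: false]] /\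
    nu = wadd (wadd (wscale 2 lam) (wsub (weyl_act w rho) rho))
              (wscale 2 (wadd (wscale c1 alpha1) (wscale c2 alpha2))).
Proof.
case=> w [r [[c1 [c2 ->]] ->]]; case: lam => l1 l2.
move: (weyl_act_orbit w rho); rewrite !inE.
move=> /orP[|/orP[|/orP[|/orP[|/orP[]]]]] /eqP ->.
- by exists [::], c1, c2; split=> //; unfold_weights; congr pair; lia.
- by exists [:: true], c1, c2; split=> //; unfold_weights; congr pair; lia.
- by exists [:: false], c1, c2; split=> //; unfold_weights; congr pair; lia.
- by exists [:: true], c1, (c2 - 1); split=> //; unfold_weights; congr pair; lia.
- by exists [:: false], (c1 - 1), c2; split=> //; unfold_weights; congr pair; lia.
- by exists [::], (c1 - 1), (c2 - 1); split=> //; unfold_weights; congr pair; lia.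
Qed.

Lemma in_P_nlambda1_bounds (R : realFieldType) (M X Y : int) :
  in_P R (M, 0) (X, Y) -> [/\ 0 <= X, 0 <= Y & X + 2 * Y <= M].
Proof.
move=> HP.
have hX : 0 <= 1 * X + 0 * Y + 0.
  by apply: (@in_hull_ge0 R _ 1 0 0 (X, Y) _ HP) => -[u v] [_]; rewrite /dominant /=; lia.
have hY : 0 <= 0 * X + 1 * Y + 0.
  by apply: (@in_hull_ge0 R _ 0 1 0 (X, Y) _ HP) => -[u v] [_]; rewrite /dominant /=; lia.
have hM : 0 <= (-1) * X + (-2) * Y + M.
  apply: (@in_hull_ge0 R _ (-1) (-2) M (X, Y) _ HP).
  by move=> -[u v] [/weights_nlambda1P [p [? ? ? ?]] _] /=; lia.
by split; lia.
Qed.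

Lemma S_set_nlambda1_weight (N : int) (nu : weight) :
  S_set (N, 0) 2 nu -> weights_of (2 * N, 0) nu.
Proof.
case=> -[X_ge0 Y_ge0] [w [[a b] [/weights_nlambda1P [p [? ? ? ?]] Enu]]].
move: X_ge0 Y_ge0; rewrite Enu; move: (weyl_act_orbit w rho); rewrite !inE.
move=> /orP[|/orP[|/orP[|/orP[|/orP[]]]]] /eqP ->; unfold_weights => ? ?;
  apply/weights_nlambda1P;
  first [exists (2 * p); split; lia | exists (2 * p + 1); split; lia
        | exists (2 * p + 2); split; lia].
Qed.

Lemma L_set_in_P_sub_S_set (R : realFieldType) (N : int) (nu : weight) :
  L_set (N, 0) 2 nu -> in_P R (2 * N, 0) nu -> S_set (N, 0) 2 nu.
Proof.
case: nu => X Y /L_set2_reduced [w [c1 [c2 [Hw E]]]].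
move=> /in_P_nlambda1_bounds [X_ge0 Y_ge0 XY_le].
split; first by split.
exists w, (N + 2 * c1 - c2, 2 * c2 - c1); split.
  apply/weights_nlambda1P; exists (- c2).
  by move: Hw E; rewrite !inE => /orP[|/orP[]] /eqP -> /=; unfold_weights => -[? ?]; split; lia.
by rewrite E; unfold_weights; congr pair; lia.
Qed.

Theorem mainTheorem12 (R : realFieldType) (n : nat) (nu : weight) :
  S_set (wscale n%:Z lambda1) 2 nu <->
  (L_set (wscale n%:Z lambda1) 2 nu /\ in_P R (wscale 2 (wscale n%:Z lambda1)) nu).
Proof.
have -> : wscale n%:Z lambda1 = (n%:Z, 0) by rewrite /wscale /= mulr1 mulr0.
have -> : wscale 2 (n%:Z, 0) = (2 * n%:Z, 0) by rewrite /wscale /= mulr0.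
split=> [HS | [HL HP]]; last exact: L_set_in_P_sub_S_set HP.
split; first exact: S_set_sub_L_set.
by apply: in_hull_mem; split; [exact: S_set_nlambda1_weight | case: HS].
Qed.
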